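(* Let $m\ge 8$ be an even integer. There do not exist a graph $G=(V,E)$ with $|V|=m$ and a function $h:E\to\{0,1\}$ such that simultaneously (1) there are at least $\dfrac{2^m}{2^{\lceil\log_2 m\rceil}}$ colourings of $G$ according to $h$, and (2) $G$ contains a connected component with more than $\frac{m}{2}$ vertices.
   Context: Given a graph $G=(V,E)$ and a function $h:E\to\{0,1\}$, a colouring of $G$ according to $h$ is a function $c:V\to\{0,1\}$ such that $c(u)\oplus c(v)=h(\{u,v\})$ for every edge $\{u,v\}\in E$. A connected component of a graph is a nonempty maximal connected induced subgraph; its cardinality is its number of vertices. *)

From mathcomp Require Import all_boot.
Set Implicit Arguments. Unset Strict Implicit. Unset Printing Implicit Defensive.

Definition simple_graph (T : finType) (e : rel T) : Prop :=
  symmetric e /\ irreflexive e.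

(* h : E -> {0,1} is represented as a function on 2-element vertex sets
   {u,v}; only its values on edges matter. *)
Definition is_colouring (T : finType) (e : rel T) (h : {set T} -> bool)
  (c : {ffun T -> bool}) : bool :=
  [forall u, forall v, e u v ==> (c u (+) c v == h [set u; v])].

Definition colourings (T : finType) (e : rel T) (h : {set T} -> bool) :
  {set {ffun T -> bool}} := [set c | is_colouring e h c].

Definition component (T : finType) (e : rel T) (x : T) : {set T} :=
  [set y | connect e x y].

From mathcomp Require Import all_boot.
From mathcomp Require Import zify.

Set Implicit Arguments.
Unset Strict Implicit.
Unset Printing Implicit Defensive.

(* Two colourings according to the same h differ by a constant on each
   connected component, so a colouring is determined by its value at one
   vertex x together with its values outside the component K of x: there are
   at most 2^(1 + m - |K|) colourings.  Combined with the lower bound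
   2^(m - ceil(log2 m)) this forces |K| <= 1 + ceil(log2 m), which is at most
   m/2 once m >= 8. *)

Section Colourings.

Variables (T : finType) (e : rel T) (h : {set T} -> bool).

Lemma colouring_edge (c : {ffun T -> bool}) u v :
  c \in colourings e h -> e u v -> c u (+) c v = h [set u; v].
Proof. by rewrite inE => /forallP/(_ u)/forallP/(_ v)/implyP H /H/eqP. Qed.

Lemma colourings_addb_connect (c1 c2 : {ffun T -> bool}) x y :
  c1 \in colourings e h -> c2 \in colourings e h -> connect e x y ->
  c1 y (+) c2 y = c1 x (+) c2 x.
Proof.
move=> col1 col2 xy.
set a := [pred z | c1 z (+) c2 z == c1 x (+) c2 x].
have a_closed : closed e a.
  move=> u v uv; rewrite !inE.
  move: (colouring_edge col1 uv) (colouring_edge col2 uv).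
  by case: (c1 u); case: (c1 v); case: (c2 u); case: (c2 v);
     case: (h [set u; v]).
by have := closed_connect a_closed xy; rewrite !inE eqxx => /esym/eqP.
Qed.

Lemma card_colourings_component x :
  #|colourings e h| <= 2 ^ (#|T| - #|component e x|).+1.
Proof.
set K := component e x; set D := x |: ~: K.
pose restr (c : {ffun T -> bool}) := D :&: [set y | c y].
have restr_inj : {in colourings e h &, injective restr}.
  move=> c1 c2 col1 col2 eq12.
  have eqD z : z \in D -> c1 z = c2 z.
    move=> Dz; have := congr1 (fun S : {set T} => z \in S) eq12.
    by rewrite !in_setI Dz !inE; case: (c1 z); case: (c2 z).
  apply/ffunP => y; have [Ky | K'y] := boolP (y \in K); last first.
    by apply: eqD; rewrite in_setU1 in_setC K'y orbT.
  have xy : connect e x y by move: Ky; rewrite inE.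
  move: (colourings_addb_connect col1 col2 xy); rewrite (eqD x) ?setU11 //.
  by case: (c1 y); case: (c2 y); case: (c2 x).
rewrite -(card_in_imset restr_inj).
have /subset_leq_card/leq_trans-> // : restr @: colourings e h \subset powerset D.
  by apply/subsetP => _ /imsetP[c _ ->]; rewrite inE subsetIl.
have Kx : x \in K by rewrite inE connect0.
rewrite card_powerset cardsU1 in_setC Kx /=.
by have := cardsC K; rewrite add1n => <-; rewrite addKn.
Qed.

End Colourings.

Lemma double_leq_exp2_pred n : 4 <= n -> n.*2 <= 2 ^ n.-1.
Proof.
elim: n => // n IHn; rewrite leq_eqVlt => /orP[/eqP <- // | n_ge4].
have := IHn n_ge4; case: n n_ge4 {IHn} => // n _ /=; rewrite expnS; lia.
Qed.

Lemma up_log2_lt_half m : 8 <= m -> ~~ odd m -> up_log 2 m < m./2.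
Proof.
move=> m_ge8 m_even; have m_eq : m = m./2.*2.
  by rewrite -[LHS]odd_double_half (negbTE m_even).
have m_half_ge4 : 4 <= m./2 by lia.
have := double_leq_exp2_pred m_half_ge4; rewrite -m_eq.
move=> /(up_log_min (isT : 1 < 2)) /leq_ltn_trans->;
  by rewrite // ltn_predL (leq_trans _ m_half_ge4).
Qed.

Theorem theorem2 (m : nat) (Hm8 : 8 <= m) (Hev : ~~ odd m) :
  ~ exists (T : finType) (e : rel T) (h : {set T} -> bool),
      [/\ #|T| = m, simple_graph e,
          2 ^ m <= #|colourings e h| * 2 ^ up_log 2 m
        & exists x : T, m < 2 * #|component e x|].
Proof.
move=> [T [e [h [card_T _ many_colourings [x big_component]]]]].
have k_le_m : #|component e x| <= m by rewrite -card_T max_card.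
have {many_colourings} : m <= (m - #|component e x|).+1 + up_log 2 m.
  rewrite -(leq_exp2l _ _ (isT : 1 < 2)) expnD.
  apply: leq_trans many_colourings _.
  by rewrite leq_mul2r -card_T card_colourings_component orbT.
have := up_log2_lt_half Hm8 Hev.
lia.
Qed.
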